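(* Let $\sigma\ge\tilde\sigma\ge1/4$ and let $\Lambda$ be a finite subset of $\mathbb{Z}^\nu$. Suppose $T(m,n)=D(m,n)+R(m,n)$ for $m,n\in\Lambda$, where $D$ is a diagonal matrix. Suppose further that for each $n\in\Lambda$ there exist numbers $l_n>0$, $0\le\mu_n\le\sigma-\tilde\sigma$, $C_n>0$ and a set $U(n)\subset\Lambda$ with $n\in U(n)$ such that: $T_{U(n)}^{-1}$ exists and $\|T_{U(n)}^{-1}\|_{\tilde\sigma+\mu_n,c}\le C_n$; $\mathrm{dist}(n,\Lambda\setminus U(n))\ge l_n$; and $C_ne^{-\mu_nl_n^c}\|R\|_{\sigma,c}\le\frac12$. Then $T_\Lambda$ is invertible and $\|T_\Lambda^{-1}\|_{\tilde\sigma,c}\le(1+w_{\tilde\sigma,c}(0))C$, where $C:=\sup_{n\in\Lambda}C_n$.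
   Context: $c=0.01$, $|\cdot|$ the maximum norm on $\mathbb{Z}^\nu$ (distances taken in it). $D_N:=\max(D_{\nu,c},D_{\nu,1})$ where $D_{\nu,c}=\sup_{n\in\mathbb{Z}^\nu,\sigma\ge1/4}\sum_m\frac{e^{\sigma|n|^c}}{e^{\sigma|m|^c}e^{\sigma|n-m|^c}}$ and $D_{\nu,1}=\sup_{n,\sigma\ge1/4}\sum_m\frac{(1+|n|)^{\nu+1}e^{\sigma|n|}}{(1+|m|)^{\nu+1}e^{\sigma|m|}(1+|n-m|)^{\nu+1}e^{\sigma|n-m|}}$; $w_{\sigma,c}(n)=D_Ne^{\sigma|n|^c}$. For a matrix $A$ indexed by a subset of $\mathbb{Z}^\nu$ (extended by zero), $\|A\|_{\sigma,c}:=\sup_n\sum_mw_{\sigma,c}(m-n)|A(m,n)|$. For $S\subset\Lambda$, $T_S$ denotes the restriction $(T(m,n))_{m,n\in S}$, and $T_S^{-1}$ its inverse as a matrix on $S$. *)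

From HB Require Import structures.
From mathcomp Require Import all_boot all_order all_algebra.
From mathcomp Require Import all_classical all_reals all_analysis.
Set Implicit Arguments. Unset Strict Implicit. Unset Printing Implicit Defensive.
Import Order.TTheory GRing.Theory Num.Theory.
Local Open Scope ring_scope.

Definition pt (nu : nat) := {ffun 'I_nu -> int}.
Definition ptsub nu (m n : pt nu) : pt nu := [ffun i => m i - n i].
Definition maxnorm nu (m : pt nu) : nat := \max_(i < nu) absz (m i).
Definition rnorm (R : realType) nu (m : pt nu) : R := (maxnorm m)%:R.

Definition cexp (R : realType) : R := 100^-1.

Definition Dc_term (R : realType) nu (sigma : R) (n m : pt nu) : R :=
  expR (sigma * powR (rnorm R n) (cexp R)) /
  (expR (sigma * powR (rnorm R m) (cexp R)) *
   expR (sigma * powR (rnorm R (ptsub n m)) (cexp R))).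

Definition D1_term (R : realType) nu (sigma : R) (n m : pt nu) : R :=
  ((1 + rnorm R n) ^+ nu.+1 * expR (sigma * rnorm R n)) /
  (((1 + rnorm R m) ^+ nu.+1 * expR (sigma * rnorm R m)) *
   ((1 + rnorm R (ptsub n m)) ^+ nu.+1 * expR (sigma * rnorm R (ptsub n m)))).

Definition D_nu_c (R : realType) (nu : nat) : \bar R :=
  ereal_sup [set x | exists (n : pt nu) (sigma : R), 4^-1 <= sigma /\
     x = esum [set: pt nu] (fun m => (Dc_term sigma n m)%:E)].
Definition D_nu_1 (R : realType) (nu : nat) : \bar R :=
  ereal_sup [set x | exists (n : pt nu) (sigma : R), 4^-1 <= sigma /\
     x = esum [set: pt nu] (fun m => (D1_term sigma n m)%:E)].

Definition D_N (R : realType) (nu : nat) : R := fine (Order.max (D_nu_c R nu) (D_nu_1 R nu)).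

Definition w (R : realType) nu (sigma : R) (n : pt nu) : R :=
  D_N R nu * expR (sigma * powR (rnorm R n) (cexp R)).

(* ||A||_{sigma,c} for a matrix A indexed by the finite set S (a duplicate-free
   list), extended by zero: sup_{n in S} sum_{m in S} w(m-n) |A(m,n)| *)
Definition mnorm (R : realType) nu (sigma : R) (S : seq (pt nu))
    (A : pt nu -> pt nu -> R) : R :=
  \big[Order.max/0]_(n <- S) \sum_(m <- S) w sigma (ptsub m n) * `|A m n|.

Definition inverse_on (R : realType) nu (S : seq (pt nu))
    (T B : pt nu -> pt nu -> R) : Prop :=
  forall m n, m \in S -> n \in S ->
    \sum_(k <- S) T m k * B k n = (m == n)%:R /\
    \sum_(k <- S) B m k * T k n = (m == n)%:R.

(* Let Q be the matrix whose n-th column is the n-th column of the local inverse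
   T_{U(n)}^{-1}.  Then T Q = 1 + E, where the column E(., n) vanishes on U(n) and equals
   (R T_{U(n)}^{-1})(., n) off U(n), i.e. at distance at least l_n from n.  At such
   distances the weight w_{sigmat} is dominated by e^{-mu_n l_n^c} w_sigma w_{sigmat + mu_n},
   so every weighted column of E is at most C_n e^{-mu_n l_n^c} ||R|| <= 1/2.  Hence 1 + E
   is invertible, B := Q (1 + E)^{-1} inverts T, and B + B E = Q gives ||B|| <= 2 C.
   Both the domination and 1 <= w rest on D_N >= 1, i.e. on the finiteness of D_{nu,c}
   and D_{nu,1}: strict concavity of t^c (resp. the triangle inequality) bounds their terms
   by multiples of (1 + |m|)^{-(nu+1)} + (1 + |n - m|)^{-(nu+1)}, which is summable over
   Z^nu because (1 + |m|)^{-(nu+1)} <= prod_i (1 + |m_i|)^{-(1 + 1/nu)}. *)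

From HB Require Import structures.
From mathcomp Require Import all_boot all_order all_algebra.
From mathcomp Require Import all_classical all_reals all_analysis.
From mathcomp Require Import ring lra zify.
Import Order.TTheory GRing.Theory Num.Theory.
Local Open Scope ring_scope.
Set Implicit Arguments. Unset Strict Implicit.

Section MaxNorm.
Variable nu : nat.
Implicit Types m n k : pt nu.

Lemma ptsubKr n m : ptsub n (ptsub n m) = m.
Proof. by apply/ffunP=> i; rewrite !ffunE subKr. Qed.

Lemma ptsubr0 n : ptsub n 0 = n.
Proof. by apply/ffunP=> i; rewrite !ffunE subr0. Qed.

Lemma coord_le_maxnorm m i : (`|m i| <= maxnorm m)%N.
Proof. by rewrite /maxnorm (bigD1 i) //= leq_maxl. Qed.

Lemma maxnorm_le m N : (forall i, `|m i| <= N)%N -> (maxnorm m <= N)%N.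
Proof. by move=> mN; apply/bigmax_leqP => i _; exact: mN. Qed.

Lemma maxnorm0 : maxnorm (0 : pt nu) = 0%N.
Proof. by apply/eqP; rewrite -leqn0; apply: maxnorm_le => i; rewrite ffunE. Qed.

Lemma maxnorm_ptsubC m n : maxnorm (ptsub m n) = maxnorm (ptsub n m).
Proof. by apply: eq_bigr => i _; rewrite !ffunE distnC. Qed.

Lemma maxnorm_ptsub_le m k n :
  (maxnorm (ptsub m n) <= maxnorm (ptsub m k) + maxnorm (ptsub k n))%N.
Proof.
apply: maxnorm_le => i; rewrite ffunE.
apply: leq_trans (leqD_dist _ (k i) _) _.
have := coord_le_maxnorm (ptsub k n) i; have := coord_le_maxnorm (ptsub m k) i.
by rewrite !ffunE; exact: leq_add.
Qed.

End MaxNorm.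

Section RealNorm.
Variables (R : realType) (nu : nat).
Implicit Types m n k : pt nu.

Lemma rnorm_ge0 m : 0 <= rnorm R m.
Proof. exact: ler0n. Qed.

Lemma rnorm_ptsubC m n : rnorm R (ptsub m n) = rnorm R (ptsub n m).
Proof. by rewrite /rnorm maxnorm_ptsubC. Qed.

Lemma rnorm_ptsub_le m k n :
  rnorm R (ptsub m n) <= rnorm R (ptsub m k) + rnorm R (ptsub k n).
Proof. by rewrite /rnorm -natrD ler_nat maxnorm_ptsub_le. Qed.

Lemma rnorm_le_ptsub n m : rnorm R n <= rnorm R m + rnorm R (ptsub n m).
Proof. by have := rnorm_ptsub_le n m 0; rewrite !ptsubr0 addrC. Qed.

End RealNorm.

Section ConcavePower.
Variable R : realType.

Lemma powR_antitone (x y e : R) : 0 < x -> x <= y -> e <= 0 -> y `^ e <= x `^ e.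
Proof.
move=> x0 xy e0; have y0 := lt_le_trans x0 xy.
have [f -> f0] : exists2 f, e = - f & 0 <= f by exists (- e); rewrite ?opprK ?oppr_ge0.
have [xf yf] := (powR_gt0 f x0, powR_gt0 f y0).
rewrite !powRN ler_pV2 ?inE ?unitfE ?xf ?yf ?gt_eqF //.
by apply: ge0_ler_powR => //; rewrite nnegrE ltW.
Qed.

Variable c : R.
Hypotheses (c_gt0 : 0 < c) (c_lt1 : c < 1).

Lemma powR2_subr1_lt1 : 2 `^ (c - 1) < 1.
Proof.
by rewrite /powR pnatr_eq0 /= expR_lt1 pmulr_llt0 ?subr_lt0 // ln_gt0 // ltr1n.
Qed.

(* Write [(a + b)^c = a (a + b)^(c-1) + b (a + b)^(c-1)]; as [c - 1 < 0], use [a + b >= 2a]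
   in the first term and [a + b >= b] in the second. *)
Lemma powR_addl_le (a b : R) : 0 <= a -> a <= b ->
  (a + b) `^ c <= 2 `^ (c - 1) * a `^ c + b `^ c.
Proof.
move=> a0 ab; have [->|a_neq0] := eqVneq a 0.
  by rewrite powR0 ?gt_eqF // mulr0 !add0r.
have a_gt0 : 0 < a by rewrite lt_def a_neq0.
have b_gt0 := lt_le_trans a_gt0 ab.
have c1_le0 : c - 1 <= 0 by rewrite subr_le0 ltW.
rewrite -(mulr_powRB1 (addr_ge0 a0 (ltW b_gt0)) c_gt0) mulrDl; apply: lerD.
- rewrite -(mulr_powRB1 a0 c_gt0) mulrCA -powRM ?ler0n //.
  apply: ler_wpM2l => //; apply: powR_antitone c1_le0; first by rewrite mulr_gt0.
  by rewrite mulr2n mulrDl mul1r lerD2l.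
- rewrite -(mulr_powRB1 (ltW b_gt0) c_gt0); apply: ler_wpM2l; first exact: ltW.
  by apply: powR_antitone c1_le0 => //; rewrite lerDr.
Qed.

Lemma powR_subadd (a b : R) : 0 <= a -> 0 <= b -> (a + b) `^ c <= a `^ c + b `^ c.
Proof.
have le_ord x y : 0 <= x -> x <= y -> (x + y) `^ c <= x `^ c + y `^ c.
  move=> x0 xy; apply: le_trans (powR_addl_le x0 xy) _; rewrite lerD2r.
  by rewrite ler_piMl ?powR_ge0 // ltW // powR2_subr1_lt1.
move=> a0 b0; have [ab|/ltW ba] := leP a b; first exact: le_ord.
by rewrite addrC [X in _ <= X]addrC; exact: le_ord.
Qed.

End ConcavePower.

Section SubseqSums.
Variables (R : numDomainType) (T : eqType).

Lemma ler_sum_mem (r : seq T) (F G : T -> R) :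
  {in r, forall x, F x <= G x} -> \sum_(x <- r) F x <= \sum_(x <- r) G x.
Proof. by move=> FG; rewrite big_seq [X in _ <= X]big_seq; apply: ler_sum. Qed.

Lemma sum_if_mem (s t : seq T) (F : T -> R) : uniq s -> uniq t -> {subset t <= s} ->
  \sum_(x <- s) (if x \in t then F x else 0) = \sum_(x <- t) F x.
Proof.
move=> us ut ts; rewrite -big_mkcond -big_filter; apply: perm_big.
apply: uniq_perm; rewrite ?filter_uniq // => x; rewrite mem_filter.
by case: (boolP (x \in t)) => // /ts ->.
Qed.

Lemma ler_sum_subseq (s t : seq T) (F : T -> R) : uniq s -> uniq t -> {subset t <= s} ->
  (forall x, x \in s -> 0 <= F x) -> \sum_(x <- t) F x <= \sum_(x <- s) F x.
Proof.
move=> us ut ts F0; rewrite -(sum_if_mem F us ut ts).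
by apply: ler_sum_mem => x xs; case: ifP => // _; exact: F0.
Qed.

End SubseqSums.

Section PSeries.
Variable R : realType.

Lemma powR_ln (x a : R) : 0 < x -> x `^ a = expR (a * ln x).
Proof. by move=> x0; rewrite /powR gt_eqF. Qed.

(* Tangent-line bound for the convex function [x |-> x^(-r)] between [k] and [k + 1]. *)
Lemma powR_telescope (r : R) (k : nat) : 0 < r -> (0 < k)%N ->
  r * k.+1%:R `^ (- (r + 1)) <= k%:R `^ (- r) - k.+1%:R `^ (- r).
Proof.
move=> r0 k0; have [ka kb] : (0 : R) < k%:R /\ (0 : R) < k.+1%:R by rewrite !ltr0n.
set a := (k%:R : R) in ka *; set b := (k.+1%:R : R) in kb *.
have ln_gap : b^-1 <= ln b - ln a.
  have ab : a / b = 1 + - b^-1 by rewrite /a /b -nat1r; field; rewrite nat1r gt_eqF.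
  have b1 : -1 < - b^-1 by rewrite ltrN2 invf_lt1 // /b ltr1n ltnS.
  by have := le_ln1Dx b1; rewrite -ab ln_div ?posrE // => h; rewrite -lerN2 opprB.
set X := b `^ (- r); have X0 : 0 < X by rewrite powR_gt0.
have ea : a `^ (- r) = X * expR (r * (ln b - ln a)).
  by rewrite /X !powR_ln // -expRD; congr expR; ring.
have eb : b `^ (- (r + 1)) = X * b^-1.
  by rewrite opprD powRD ?(gt_eqF kb) ?implybT // powR_inv1 // ltW.
rewrite ea eb; have := expR_ge1Dx (r * (ln b - ln a)).
set Y := expR _; set d := ln b - ln a in ln_gap *; set i := b^-1 in ln_gap * => Y1.
have : 0 <= (Y - 1 - r * d) * X by apply: mulr_ge0; lra.
have : 0 <= (d - i) * (r * X) by apply: mulr_ge0; [lra | apply: mulr_ge0; lra].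
nra.
Qed.

Lemma sum_powR_le (r : R) N : 0 < r ->
  \sum_(k < N.+1) k.+1%:R `^ (- (r + 1)) <= 1 + r^-1.
Proof.
move=> r0; rewrite big_ord_recl /= powR1 lerD2l -(ler_pM2l r0) mulfV ?gt_eqF //.
rewrite mulr_sumr; set f := fun k : nat => (k.+1%:R : R) `^ (- r).
apply: le_trans (_ : \sum_(i < N) (f i - f i.+1) <= 1).
  by apply: ler_sum => i _; apply: powR_telescope.
have -> : \sum_(i < N) (f i - f i.+1) = f 0%N - f N.
  by elim: N => [|N IH]; rewrite ?big_ord0 ?subrr // big_ord_recr /= IH addrA subrK.
by rewrite /f powR1 lerBlDr lerDl powR_ge0.
Qed.

End PSeries.

Section LatticeSums.
Variables (R : realType) (nu : nat).
Implicit Types (m n : pt nu) (s : seq (pt nu)).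

(* A point of the box [max_i |m_i| <= N] is encoded by the absolute values and signs of its
   coordinates, which turns the sum into a sum over all functions ['I_nu -> 'I_N.+1 * bool]. *)
Lemma sum_prod_coord_le (f : nat -> R) s N :
  uniq s -> (forall m, m \in s -> (maxnorm m <= N)%N) -> (forall k, 0 <= f k) ->
  \sum_(m <- s) \prod_(i < nu) f `|m i|%N <= (2 * \sum_(k < N.+1) f k) ^+ nu.
Proof.
move=> us sN f0; pose J := ('I_N.+1 * bool)%type.
pose enc (g : {ffun 'I_nu -> J}) : pt nu :=
  [ffun i => if (g i).2 then - ((g i).1 : nat)%:Z else ((g i).1 : nat)%:Z].
pose dec m : {ffun 'I_nu -> J} := [ffun i => (inord `|m i|, m i < 0)].
have decK m : m \in s -> enc (dec m) = m.
  move=> ms; apply/ffunP => i; rewrite !ffunE /= inordK; last first.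
    by rewrite ltnS (leq_trans (coord_le_maxnorm m i)) ?sN.
  by case: (ltrP (m i) 0) => mi; [rewrite ltz0_abs ?opprK | rewrite gez0_abs].
have encE g i : `|enc g i|%N = (g i).1 by rewrite ffunE; case: (g i).2; rewrite ?abszN.
have -> : \sum_(m <- s) \prod_(i < nu) f `|m i|%N
          = \sum_(g <- map dec s) \prod_(i < nu) f `|enc g i|%N.
  by rewrite big_map; apply: eq_big_seq => m ms; rewrite decK.
apply: le_trans (_ : _ <= \sum_g \prod_(i < nu) f `|enc g i|%N) _.
  apply: ler_sum_subseq; rewrite ?index_enum_uniq //.
  - by rewrite map_inj_in_uniq // => x y xs ys exy; rewrite -(decK x) // -(decK y) // exy.
  - by move=> g _; rewrite mem_index_enum.
  - by move=> g _; apply: prodr_ge0.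
under eq_bigr do under eq_bigr do rewrite encE.
rewrite -(bigA_distr_bigA (fun (i : 'I_nu) (j : J) => f j.1)) prodr_const card_ord.
have -> : \sum_(j : J) f j.1 = \sum_(k < N.+1) \sum_(b : bool) f k by rewrite pair_big.
by rewrite mulr_sumr; under eq_bigr do rewrite big_bool /= -mulr2n -mulr_natl.
Qed.

Definition polyw m : R := ((1 + rnorm R m) ^+ nu.+1)^-1.

Lemma polyw_ge0 m : 0 <= polyw m.
Proof. by rewrite invr_ge0 exprn_ge0 // addr_ge0 ?rnorm_ge0. Qed.

(* The exponent [1 + 1/nu > 1] of each factor makes the coordinate sums converge. *)
Lemma polyw_le_prod m :
  polyw m <= \prod_(i < nu) (`|m i|%N.+1%:R : R) `^ (- (nu%:R^-1 + 1)).
Proof.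
case: (posnP nu) => [nu0|nu_gt0].
  rewrite big1 => [|i]; last by have := ltn_ord i; rewrite {2}nu0.
  have m1 : 1 <= 1 + rnorm R m by rewrite lerDl rnorm_ge0.
  by rewrite invf_le1 ?exprn_ege1 ?exprn_gt0 // (lt_le_trans ltr01).
set p := nu%:R^-1 + 1; set M := ((maxnorm m).+1%:R : R).
have M_gt0 : 0 < M by rewrite ltr0n.
apply: le_trans (_ : _ <= \prod_(i < nu) M `^ (- p)) _; last first.
  apply: ler_prod => i _; rewrite powR_ge0 /=; apply: powR_antitone.
  - by rewrite ltr0n.
  - by rewrite ler_nat ltnS coord_le_maxnorm.
  - by rewrite oppr_le0 addr_ge0 ?invr_ge0.
rewrite prodr_const card_ord -powR_mulrn ?powR_ge0 // -powRrM.
have -> : - p * nu%:R = - nu.+1%:R.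
  by rewrite /p mulNr mulrDl mul1r mulVf ?nat1r // pnatr_eq0 -lt0n.
by rewrite powR_invn ?(ltW M_gt0) // /polyw /rnorm nat1r.
Qed.

Lemma sum_polyw_le s : uniq s -> \sum_(m <- s) polyw m <= (2 * (1 + nu%:R)) ^+ nu.
Proof.
move=> us; set N := \max_(m <- s) maxnorm m.
have sN m : m \in s -> (maxnorm m <= N)%N by move=> ms; rewrite /N (big_rem m) ?leq_maxl.
pose f k : R := k.+1%:R `^ (- (nu%:R^-1 + 1)).
have f0 k : 0 <= f k by exact: powR_ge0.
apply: le_trans (_ : _ <= \sum_(m <- s) \prod_(i < nu) f `|m i|%N) _.
  by apply: ler_sum => m _; exact: polyw_le_prod.
apply: le_trans (sum_prod_coord_le us sN f0) _.
case: (posnP nu) => [->|nu_gt0]; first by rewrite !expr0.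
have sum_f0 : 0 <= \sum_(k < N.+1) f k by apply: sumr_ge0.
rewrite lerXn2r ?nnegrE ?mulr_ge0 ?addr_ge0 // ler_pM2l //.
rewrite -[X in _ <= 1 + X](invrK nu%:R); apply: sum_powR_le.
by rewrite invr_gt0 ltr0n.
Qed.

Lemma sum_polyw_ptsub_le n s : uniq s ->
  \sum_(m <- s) polyw (ptsub n m) <= (2 * (1 + nu%:R)) ^+ nu.
Proof.
move=> us; rewrite -(big_map (ptsub n) xpredT polyw); apply: sum_polyw_le.
by rewrite map_inj_in_uniq // => x y _ _ e; rewrite -(ptsubKr n x) e ptsubKr.
Qed.

End LatticeSums.

Section Decay.
Variable R : realType.

Lemma cexp_gt0 : 0 < cexp R. Proof. by rewrite /cexp invr_gt0. Qed.
Lemma cexp_lt1 : cexp R < 1. Proof. by rewrite /cexp invf_lt1 // ltr1n. Qed.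

Lemma exprD_le2 (x y : R) q : 0 <= x -> 0 <= y -> (x + y) ^+ q <= 2 ^+ q * (x ^+ q + y ^+ q).
Proof.
have le_ord u v : 0 <= u -> u <= v -> (u + v) ^+ q <= 2 ^+ q * (u ^+ q + v ^+ q).
  move=> u0 uv; apply: (@le_trans _ _ ((2 * v) ^+ q)).
    apply: lerXn2r; rewrite ?nnegrE ?addr_ge0 ?mulr_ge0 ?(le_trans u0 uv) //.
    by rewrite mulr_natl mulr2n lerD2r.
  by rewrite exprMn ler_pM2l ?exprn_gt0 // lerDr exprn_ge0.
move=> x0 y0; have [xy|/ltW yx] := leP x y; first exact: le_ord.
by rewrite addrC [_ ^+ q + _]addrC; exact: le_ord.
Qed.

(* With [c = 1/100], [t^(q+1) = (t^c)^(100 (q+1))] is controlled by one term of the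
   exponential series of [k t^c]. *)
Lemma expR_cexp_decay (k : R) q : 0 < k -> exists2 K, 0 < K &
  forall t, 0 <= t -> expR (- (k * t `^ cexp R)) <= K / (1 + t) ^+ q.+1.
Proof.
move=> k0; have [M EM] : exists M, M.+1 = (100 * q.+1)%N by exists (99 + 100 * q)%N; lia.
set F := (M.+1`!%:R : R); have F0 : 0 < F by rewrite ltr0n fact_gt0.
have kM : 0 < k ^+ M.+1 by rewrite exprn_gt0.
set K0 := 1 + F / k ^+ M.+1; have K01 : 1 <= K0 by rewrite lerDl divr_ge0 ?ltW.
have K0_gt0 := lt_le_trans ltr01 K01.
exists (2 ^+ q.+1 * K0) => [|t t0]; first by rewrite mulr_gt0 ?exprn_gt0.
have x0 : 0 <= k * t `^ cexp R by rewrite mulr_ge0 ?powR_ge0 ?ltW.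
have tcM : (t `^ cexp R) ^+ M.+1 = t ^+ q.+1.
  by rewrite -powR_mulrn ?powR_ge0 // -powRrM -powR_mulrn // EM natrM /cexp mulKf.
have t1 : 0 < (1 + t) ^+ q.+1 by rewrite exprn_gt0 // ltr_pwDl.
rewrite expRN ler_pdivlMr // mulrC ler_pdivrMr ?expR_gt0 //.
apply: le_trans (exprD_le2 q.+1 ler01 t0) _; rewrite expr1n -mulrA ler_pM2l ?exprn_gt0 //.
apply: le_trans (_ : _ <= K0 * (1 + (k * t `^ cexp R) ^+ M.+1 / F)) _; last first.
  by rewrite ler_pM2l // expR_ge1Dxn.
rewrite exprMn tcM mulrDr mulr1 lerD //.
rewrite [X in _ <= X](_ : _ = t ^+ q.+1 * (k ^+ M.+1 / F + 1)); last first.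
  by rewrite /K0; field; rewrite ?gt_eqF.
by rewrite ler_peMr ?exprn_ge0 // lerDr divr_ge0 ?ltW.
Qed.

End Decay.

Section DNFinite.
Variables (R : realType) (nu : nat).
Implicit Types (m n : pt nu).

Local Notation c := (cexp R).

Lemma cexp_excess_le (sigma N x y : R) : 4^-1 <= sigma -> 0 <= x -> x <= y ->
  0 <= N -> N <= x + y ->
  sigma * N `^ c - (sigma * x `^ c + sigma * y `^ c) <= - ((1 - 2 `^ (c - 1)) / 4 * x `^ c).
Proof.
move=> s4 x0 xy N0 Nxy; have s0 : 0 < sigma by apply: lt_le_trans s4; rewrite invr_gt0.
have Nc : N `^ c <= 2 `^ (c - 1) * x `^ c + y `^ c.
  apply: le_trans (powR_addl_le (cexp_gt0 R) (cexp_lt1 R) x0 xy).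
  apply: ge0_ler_powR => //; first exact: ltW (cexp_gt0 R).
  by rewrite nnegrE addr_ge0 ?(le_trans x0 xy).
have g0 : 0 <= (1 - 2 `^ (c - 1)) * x `^ c.
  by rewrite mulr_ge0 ?powR_ge0 // subr_ge0 ltW // (powR2_subr1_lt1 (cexp_lt1 R)).
have : sigma * N `^ c <= sigma * (2 `^ (c - 1) * x `^ c + y `^ c) by rewrite ler_pM2l.
have : 4^-1 * ((1 - 2 `^ (c - 1)) * x `^ c) <= sigma * ((1 - 2 `^ (c - 1)) * x `^ c).
  exact: ler_wpM2r.
move: (2 `^ (c - 1)) (x `^ c) (y `^ c) (N `^ c) => a X Y Z; lra.
Qed.

Lemma Dc_term_le : exists2 K, 0 <= K & forall (sigma : R) n m, 4^-1 <= sigma ->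
  Dc_term sigma n m <= K * (polyw R m + polyw R (ptsub n m)).
Proof.
have g0 : 0 < (1 - 2 `^ (c - 1)) / 4 :> R.
  by rewrite divr_gt0 // subr_gt0 (powR2_subr1_lt1 (cexp_lt1 R)).
have [K K0 decayK] := expR_cexp_decay nu g0.
exists K => [|sigma n m s4]; first exact: ltW.
have ordered (x y : R) : 0 <= x -> x <= y -> rnorm R n <= x + y ->
    expR (sigma * rnorm R n `^ c) / (expR (sigma * x `^ c) * expR (sigma * y `^ c))
      <= K / (1 + x) ^+ nu.+1.
  move=> x0 xy nxy; apply: le_trans _ (decayK _ x0); rewrite -expRD -expRB ler_expR.
  exact: cexp_excess_le s4 x0 xy (rnorm_ge0 R n) nxy.
have [a0 b0] := (rnorm_ge0 R m, rnorm_ge0 R (ptsub n m)).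
have nab := rnorm_le_ptsub R n m.
rewrite /Dc_term mulrDr.
have [ab|/ltW ba] := leP (rnorm R m) (rnorm R (ptsub n m)).
- apply: le_trans (ordered _ _ a0 ab nab) _.
  by rewrite lerDl mulr_ge0 ?polyw_ge0 ?ltW.
- rewrite [X in _ / X]mulrC; apply: le_trans (ordered _ _ b0 ba _) _; first by rewrite addrC.
  by rewrite lerDr mulr_ge0 ?polyw_ge0 ?ltW.
Qed.

Lemma D1_term_le (sigma : R) n m : 0 <= sigma ->
  D1_term sigma n m <= 2 ^+ nu.+1 * (polyw R m + polyw R (ptsub n m)).
Proof.
move=> s0; set a := rnorm R m; set b := rnorm R (ptsub n m); set N := rnorm R n.
have [a0 b0] : 0 <= a /\ 0 <= b by rewrite !rnorm_ge0.
have Nab : N <= a + b := rnorm_le_ptsub R n m.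
set A := 1 + a; set B := 1 + b; set C := 1 + N.
have [A0 B0 C0] : [/\ 0 < A, 0 < B & 0 < C] by rewrite !ltr_pwDl ?rnorm_ge0.
rewrite /D1_term -/a -/b -/N -/A -/B -/C.
have -> : C ^+ nu.+1 * expR (sigma * N) /
      (A ^+ nu.+1 * expR (sigma * a) * (B ^+ nu.+1 * expR (sigma * b)))
    = (C / (A * B)) ^+ nu.+1 * expR (sigma * N - (sigma * a + sigma * b)).
  rewrite expRB expRD expr_div_n exprMn.
  have : 0 < A ^+ nu.+1 /\ 0 < B ^+ nu.+1 by rewrite !exprn_gt0.
  move: (A ^+ _) (B ^+ _) (expR_gt0 (sigma * a)) (expR_gt0 (sigma * b)) => x y ea eb [x0 y0].
  by field; rewrite !gt_eqF.
have CAB : 0 <= C / (A * B) by rewrite divr_ge0 ?mulr_ge0 // ltW.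
have expR_le1 : expR (sigma * N - (sigma * a + sigma * b)) <= 1.
  by rewrite expR_le1 -mulrDr subr_le0 ler_wpM2l.
apply: le_trans (_ : _ <= (A^-1 + B^-1) ^+ nu.+1) _.
  rewrite -[X in _ <= X]mulr1; apply: ler_pM => //; rewrite ?exprn_ge0 ?expR_ge0 //.
  apply: lerXn2r; rewrite ?nnegrE ?addr_ge0 ?invr_ge0 ?(ltW A0) ?(ltW B0) //.
  rewrite ler_pdivrMr ?mulr_gt0 // mulrDl mulKf ?gt_eqF // mulrCA mulVf ?gt_eqF //.
  by rewrite mulr1 /A /B /C; lra.
by rewrite /polyw -/a -/b -/A -/B -!exprVn exprD_le2 // invr_ge0 ltW.
Qed.

Lemma esum_le_sums (T : choiceType) (f : T -> R) K :
  (forall s : seq T, uniq s -> \sum_(x <- s) f x <= K) ->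
  (esum [set: T] (fun x => (f x)%:E) <= K%:E)%E.
Proof.
move=> sumK; apply: ge_ereal_sup => x [A [finA _] <-].
by rewrite fsbig_finite // sumEFin lee_fin sumK // finmap.fset_uniq.
Qed.

Let L := (2 * (1 + nu%:R) : R) ^+ nu.

Definition sup_lattice_sum (g : R -> pt nu -> pt nu -> R) : \bar R :=
  ereal_sup [set x | exists n (sigma : R), 4^-1 <= sigma /\
     x = esum [set: pt nu] (fun m => (g sigma n m)%:E)].

Lemma sup_lattice_sum_le (g : R -> pt nu -> pt nu -> R) K : 0 <= K ->
  (forall sigma n m, 4^-1 <= sigma -> g sigma n m <= K * (polyw R m + polyw R (ptsub n m))) ->
  (sup_lattice_sum g <= (K * (L + L))%:E)%E.
Proof.
move=> K0 gK; apply: ge_ereal_sup => x [n [sigma [s4 ->]]]; apply: esum_le_sums => s us.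
apply: le_trans (_ : _ <= \sum_(m <- s) K * (polyw R m + polyw R (ptsub n m))) _.
  by apply: ler_sum => m _; exact: gK.
rewrite -mulr_sumr big_split /= ler_wpM2l //.
by apply: lerD; [exact: sum_polyw_le | exact: sum_polyw_ptsub_le].
Qed.

(* [D_N] is the [fine] part of a supremum: it is [0], not [+oo], unless the sums are bounded. *)
Lemma D_N_ge1 : 1 <= D_N R nu.
Proof.
have [Kc Kc0 DcK] := Dc_term_le.
have Dc_fin : (D_nu_c R nu <= (Kc * (L + L))%:E)%E := sup_lattice_sum_le Kc0 DcK.
have D1_fin : (D_nu_1 R nu <= (2 ^+ nu.+1 * (L + L))%:E)%E.
  apply: sup_lattice_sum_le => [|sigma n m s4]; first exact: exprn_ge0.
  by apply: D1_term_le; apply: le_trans s4; rewrite invr_ge0.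
have at0 (F : R -> pt nu -> pt nu -> R) :
    (esum [set: pt nu] (fun m => (F 4^-1 0 m)%:E) <= sup_lattice_sum F)%E.
  by apply: ereal_sup_ubound; exists 0, 4^-1.
have Dc_ge1 : (1 <= D_nu_c R nu)%E.
  apply: le_trans (at0 (@Dc_term R nu)); apply: esum_ge; exists [set (0 : pt nu)]%classic.
    by split; [exact: finite_set1 |].
  rewrite fsbig_set1 lee_fin /Dc_term ptsubr0 /rnorm maxnorm0 powR0 ?gt_eqF ?cexp_gt0 //.
  by rewrite mulr0 expR0 !mul1r invr1.
have D1_ge0 : (0 <= D_nu_1 R nu)%E.
  apply: le_trans (at0 (@D1_term R nu)); apply: esum_ge0 => m _.
  by rewrite lee_fin divr_ge0 ?mulr_ge0 ?exprn_ge0 ?expR_ge0 ?addr_ge0 ?ler0n.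
have fc : D_nu_c R nu \is a fin_num.
  by rewrite ge0_fin_numE ?(le_lt_trans Dc_fin) ?ltry // (le_trans _ Dc_ge1).
have f1 : D_nu_1 R nu \is a fin_num by rewrite ge0_fin_numE ?(le_lt_trans D1_fin) ?ltry.
rewrite /D_N -(fineK fc) -(fineK f1) -EFin_max /= le_max.
by rewrite -lee_fin fineK ?Dc_ge1.
Qed.

End DNFinite.

(* Kernel vectors [v] of [(1 + E)^T] satisfy [sum |v| <= e sum |v|]. *)
Lemma unitmx_1D_colsum (R : numFieldType) n (E : 'M[R]_n) e : e < 1 ->
  (forall j, \sum_i `|E i j| <= e) -> 1%:M + E \in unitmx.
Proof.
move=> e1 colE; rewrite unitmxE unitfE -det_tr; apply/negP => /det0P[v v_neq0 vE].
move: vE; rewrite raddfD /= trmx1 mulmxDr mulmx1.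
move/(canRL (addrK _)); rewrite sub0r => vE.
have vN i : v 0 i = - \sum_j v 0 j * E i j.
  by rewrite {1}vE !mxE; congr (- _); apply: eq_bigr => j _; rewrite mxE.
set S := \sum_i `|v 0 i|.
have S_le : S <= e * S.
  rewrite {1}/S; under eq_bigr do rewrite vN normrN.
  apply: le_trans (ler_sum _ (fun i _ => ler_norm_sum _ _ _)) _.
  rewrite exchange_big /= /S mulr_sumr; apply: ler_sum => j _.
  under eq_bigr do rewrite normrM.
  by rewrite -mulr_sumr mulrC ler_wpM2r.
have S_le0 : S <= 0.
  have e1' : 0 < 1 - e by rewrite subr_gt0.
  by rewrite -(pmulr_rle0 S e1') mulrBl mul1r subr_le0.
apply/negP: v_neq0; rewrite negbK; apply/eqP/rowP => i; rewrite mxE; apply/normr0_eq0.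
apply/le_anti; rewrite normr_ge0 andbT (le_trans _ S_le0) // /S (bigD1 i) //= lerDl.
exact: sumr_ge0.
Qed.

Section SeqMatrices.
Variables (R : numFieldType) (X : eqType) (S : seq X).
Implicit Types (A B T Q E : X -> X -> R) (x y : X).

Definition smul A B x y : R := \sum_(k <- S) A x k * B k y.

Local Notation at_ := (tnth (in_tuple S)).

Definition seqmx A : 'M[R]_(size S) := \matrix_(i, j) A (at_ i) (at_ j).

Definition mxseq (M : 'M[R]_(size S)) x y : R :=
  if insub (index x S) is Some i then
    if insub (index y S) is Some j then M i j else 0
  else 0.

Lemma smul_tnth A B i j : smul A B (at_ i) (at_ j) = (seqmx A *m seqmx B) i j.
Proof. by rewrite /smul big_tnth !mxE; apply: eq_bigr => k _; rewrite !mxE. Qed.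

Hypothesis uS : uniq S.

Lemma insub_index_tnth i : insub (index (at_ i) S) = Some i.
Proof. by rewrite (tnth_nth (at_ i)) index_uniq // valK. Qed.

Lemma mxseq_tnth M i j : mxseq M (at_ i) (at_ j) = M i j.
Proof. by rewrite /mxseq !insub_index_tnth. Qed.

Lemma mxseqK M : seqmx (mxseq M) = M.
Proof. by apply/matrixP => i j; rewrite mxE mxseq_tnth. Qed.

Lemma delta_tnth i j : (at_ i == at_ j)%:R = 1%:M i j :> R.
Proof.
by rewrite !mxE (inj_eq (elimT (tuple_uniqP (in_tuple S)) uS)).
Qed.

Lemma smul_inverse_perturb T Q E e : e < 1 ->
  {in S &, forall x y, smul T Q x y = (x == y)%:R + E x y} ->
  {in S, forall y, \sum_(x <- S) `|E x y| <= e} ->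
  exists B, {in S &, forall x y, smul T B x y = (x == y)%:R /\ smul B T x y = (x == y)%:R}
         /\ {in S &, forall x y, B x y + smul B E x y = Q x y}.
Proof.
move=> e1 TQ colE.
have MQ : seqmx T *m seqmx Q = 1%:M + seqmx E.
  by apply/matrixP => i j; rewrite -smul_tnth TQ ?mem_tnth // delta_tnth !mxE.
have unitM : seqmx T \in unitmx.
  have : 1%:M + seqmx E \in unitmx.
    apply: (unitmx_1D_colsum e1) => j.
    have -> : \sum_i `|seqmx E i j| = \sum_(x <- S) `|E x (at_ j)|.
      by rewrite [RHS]big_tnth; apply: eq_bigr => i _; rewrite mxE.
    exact (colE _ (mem_tnth j (in_tuple S))).
  by rewrite -MQ unitmx_mul => /andP[].
exists (mxseq (invmx (seqmx T))); split=> x y /seq_tnthP[i ->] /seq_tnthP[j ->].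
  by rewrite !smul_tnth mxseqK mulmxV ?mulVmx // delta_tnth.
have QE : seqmx Q = invmx (seqmx T) + invmx (seqmx T) *m seqmx E.
  by rewrite -[seqmx Q]mul1mx -(mulVmx unitM) -mulmxA MQ mulmxDr mulmx1.
move/matrixP/(_ i j): QE.
by rewrite smul_tnth mxseqK mxseq_tnth !mxE; move=> ->.
Qed.

End SeqMatrices.

Section Weight.
Variables (R : realType) (nu : nat).
Implicit Types (s : R) (m n k j : pt nu).

Definition cnorm m : R := rnorm R m `^ cexp R.

Lemma cnorm_ge0 m : 0 <= cnorm m.
Proof. exact: powR_ge0. Qed.

Lemma cnorm_ptsub_le m k n : cnorm (ptsub m n) <= cnorm (ptsub m k) + cnorm (ptsub k n).
Proof.
apply: le_trans (powR_subadd (cexp_gt0 R) (cexp_lt1 R) (rnorm_ge0 _ _) (rnorm_ge0 _ _)).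
apply: ge0_ler_powR; first exact: ltW (cexp_gt0 R).
- by rewrite nnegrE rnorm_ge0.
- by rewrite nnegrE addr_ge0 ?rnorm_ge0.
- exact: rnorm_ptsub_le.
Qed.

Lemma wE s m : w s m = D_N R nu * expR (s * cnorm m).
Proof. by []. Qed.

Lemma w_ge0 s m : 0 <= w s m.
Proof. by rewrite wE mulr_ge0 ?expR_ge0 // (le_trans ler01 (D_N_ge1 R nu)). Qed.

Lemma w_ge1 s m : 0 <= s -> 1 <= w s m.
Proof.
move=> s0; rewrite wE -[1]mulr1; apply: ler_pM => //; first exact: D_N_ge1.
by rewrite -expR0 ler_expR mulr_ge0 ?cnorm_ge0.
Qed.

Lemma w_le_sigma s1 s2 m : s1 <= s2 -> w s1 m <= w s2 m.
Proof.
move=> s12; rewrite !wE ler_wpM2l ?(le_trans ler01 (D_N_ge1 R nu)) // ler_expR.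
by rewrite ler_wpM2r ?cnorm_ge0.
Qed.

Lemma w_ptsub_le s m k n : 0 <= s ->
  w s (ptsub m n) <= w s (ptsub m k) * w s (ptsub k n).
Proof.
move=> s0; have D1 := D_N_ge1 R nu; have D0 := le_trans ler01 D1.
rewrite !wE mulrACA -expRD; apply: ler_pM; rewrite ?expR_ge0 ?ler_peMl //.
by rewrite ler_expR -mulrDr ler_wpM2l // cnorm_ptsub_le.
Qed.

(* Where [|k - n| >= l], the excess [mu] of the weight on the right absorbs [e^(mu l^c)]. *)
Lemma w_ptsub_far_le (st s mu l : R) k j n :
  0 <= st -> 0 <= mu -> st + mu <= s -> 0 <= l -> l <= rnorm R (ptsub n k) ->
  w st (ptsub k n) <= expR (- (mu * l `^ cexp R)) * (w s (ptsub k j) * w (st + mu) (ptsub j n)).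
Proof.
move=> st0 mu0 le_s l0 lkn; have D1 := D_N_ge1 R nu; have D0 := le_trans ler01 D1.
have lc : l `^ cexp R <= cnorm (ptsub k n).
  by rewrite /cnorm rnorm_ptsubC ge0_ler_powR ?nnegrE ?rnorm_ge0 // ltW ?cexp_gt0.
have tri := cnorm_ptsub_le k j n.
have [y0 z0] := (cnorm_ge0 (ptsub k j), cnorm_ge0 (ptsub j n)).
rewrite !wE; move: (l `^ cexp R) (cnorm (ptsub k n)) (cnorm (ptsub k j)) (cnorm (ptsub j n))
  lc tri y0 z0 => L x y z lc tri y0 z0.
have -> : expR (- (mu * L)) * (D_N R nu * expR (s * y) * (D_N R nu * expR ((st + mu) * z)))
    = D_N R nu * D_N R nu * expR (- (mu * L) + (s * y + (st + mu) * z)).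
  by rewrite !expRD; ring.
apply: ler_pM; rewrite ?expR_ge0 ?ler_peMl // ler_expR.
have h1 : mu * L <= mu * x by rewrite ler_wpM2l.
have h2 : (st + mu) * x <= (st + mu) * (y + z) by rewrite ler_wpM2l ?addr_ge0.
have h3 : (st + mu) * y <= s * y by rewrite ler_wpM2r.
nra.
Qed.

End Weight.

Section ColumnNorms.
Variables (R : realType) (nu : nat).
Implicit Types (s : R) (S : seq (pt nu)) (A B E Q : pt nu -> pt nu -> R) (n : pt nu).

Definition colnorm s S A n : R := \sum_(m <- S) w s (ptsub m n) * `|A m n|.

Lemma colnorm_le_mnorm s S A n : n \in S -> colnorm s S A n <= mnorm s S A.
Proof. by move=> nS; exact: (le_bigmax_seq 0 n xpredT (colnorm s S A) nS). Qed.

Lemma mnorm_ge0 s S A : 0 <= mnorm s S A.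
Proof. exact: bigmax_ge_id. Qed.

Lemma mnorm_le s S A x : 0 <= x -> {in S, forall n, colnorm s S A n <= x} ->
  mnorm s S A <= x.
Proof. by move=> x0 colx; rewrite /mnorm big_seq_cond; apply: bigmax_le => // n /andP[/colx]. Qed.

Lemma colnorm_if_mem s S S' A n : uniq S -> uniq S' -> {subset S' <= S} ->
  colnorm s S (fun x y => if x \in S' then A x y else 0) n = colnorm s S' A n.
Proof.
move=> uS uS' sub; rewrite /colnorm -(sum_if_mem _ uS uS' sub).
by apply: eq_bigr => m _; case: ifP; rewrite ?normr0 ?mulr0.
Qed.

Lemma colnorm_le_sigma s1 s2 S A n : s1 <= s2 -> colnorm s1 S A n <= colnorm s2 S A n.
Proof. by move=> s12; apply: ler_sum => m _; apply: ler_wpM2r; rewrite ?w_le_sigma. Qed.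

Lemma colnorm_smul_le s S A B n : 0 <= s ->
  colnorm s S (smul S A B) n <= mnorm s S A * colnorm s S B n.
Proof.
move=> s0; pose F m k := w s (ptsub m k) * `|A m k| * (w s (ptsub k n) * `|B k n|).
apply: le_trans (_ : _ <= \sum_(m <- S) \sum_(k <- S) F m k) _.
  apply: ler_sum => m _; apply: le_trans (ler_wpM2l (w_ge0 _ _) (ler_norm_sum _ _ _)) _.
  rewrite [X in X <= _]mulr_sumr; apply: ler_sum => k _; rewrite normrM /F [X in _ <= X]mulrACA.
  by apply: ler_wpM2r; [rewrite mulr_ge0 | exact: w_ptsub_le s0].
rewrite [X in X <= _]exchange_big /= /colnorm [X in _ <= X]mulr_sumr.
apply: ler_sum_mem => k kS; rewrite /F -mulr_suml.
by apply: ler_wpM2r; [rewrite mulr_ge0 ?w_ge0 | exact: colnorm_le_mnorm kS].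
Qed.

Lemma colnorm_far_smul_le (st s mu l : R) S S' A B n :
  0 <= st -> 0 <= mu -> st + mu <= s -> 0 <= l -> {subset S' <= S} ->
  {in S, forall k, k \notin S' -> l <= rnorm R (ptsub n k)} ->
  colnorm st S (fun k _ => if k \in S' then 0 else \sum_(j <- S') A k j * B j n) n
    <= expR (- (mu * l `^ cexp R)) * (mnorm s S A * colnorm (st + mu) S' B n).
Proof.
move=> st0 mu0 le_s l0 sub far; set eps := expR _.
pose F k j := w s (ptsub k j) * `|A k j| * (w (st + mu) (ptsub j n) * `|B j n|).
have F0 k j : 0 <= F k j by apply: mulr_ge0; apply: mulr_ge0; rewrite ?w_ge0.
apply: le_trans (_ : _ <= \sum_(k <- S) eps * \sum_(j <- S') F k j) _.
  apply: ler_sum_mem => k kS; case: ifPn => kS'.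
    by rewrite normr0 mulr0; apply: mulr_ge0; [exact: expR_ge0 | exact: sumr_ge0].
  apply: le_trans (ler_wpM2l (w_ge0 _ _) (ler_norm_sum _ _ _)) _.
  rewrite [X in X <= _]mulr_sumr [X in _ <= X]mulr_sumr; apply: ler_sum => j _.
  apply: le_trans (_ : _ <= eps * (w s (ptsub k j) * w (st + mu) (ptsub j n))
                             * (`|A k j| * `|B j n|)) _.
    rewrite normrM; apply: ler_wpM2r; first by rewrite mulr_ge0.
    exact: w_ptsub_far_le (far _ kS kS').
  by rewrite /F [X in _ <= eps * X]mulrACA [X in _ <= X]mulrA.
rewrite -[X in X <= _]mulr_sumr; apply: ler_wpM2l; first exact: expR_ge0.
rewrite [X in X <= _]exchange_big /= /colnorm [X in _ <= X]mulr_sumr.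
apply: ler_sum_mem => j jS'; rewrite /F -mulr_suml.
by apply: ler_wpM2r; [rewrite mulr_ge0 ?w_ge0 | exact: colnorm_le_mnorm (sub _ jS')].
Qed.

Lemma mnorm_resolvent_le s S A E Q (c e : R) : 0 <= s -> 0 <= c -> 0 <= e < 1 ->
  {in S &, forall x y, A x y + smul S A E x y = Q x y} ->
  {in S, forall n, colnorm s S Q n <= c} -> {in S, forall n, colnorm s S E n <= e} ->
  mnorm s S A <= c / (1 - e).
Proof.
move=> s0 c0 /andP[e0 e1] AQ Qc Ee; have e1' : 0 < 1 - e by rewrite subr_gt0.
set M := mnorm s S A; have M0 : 0 <= M := mnorm_ge0 s S A.
suff Mle : M <= c + e * M by rewrite ler_pdivlMr // mulrBr mulr1 lerBlDr mulrC.
apply: mnorm_le => [|n nS]; first by rewrite addr_ge0 ?mulr_ge0.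
apply: le_trans (_ : _ <= colnorm s S Q n + colnorm s S (smul S A E) n) _.
  rewrite /colnorm -big_split /=; apply: ler_sum_mem => x xS; rewrite -mulrDr.
  apply: ler_wpM2l; first exact: w_ge0.
  by have := ler_normB (A x n + smul S A E x n) (smul S A E x n); rewrite addrK AQ.
apply: lerD; first exact: Qc.
apply: le_trans (colnorm_smul_le _ _ _ _ s0) _; rewrite mulrC.
by apply: ler_wpM2r; [exact: M0 | exact: Ee].
Qed.

End ColumnNorms.

Section LocalInverses.
Variables (R : realType) (nu : nat) (sigma sigmat : R) (Lambda : seq (pt nu)).
Variables (T D Rm : pt nu -> pt nu -> R) (l mu Cn : pt nu -> R) (U : pt nu -> seq (pt nu)).
Variable Bloc : pt nu -> pt nu -> pt nu -> R.

Hypotheses (sigmat_ge : 4^-1 <= sigmat) (uLambda : uniq Lambda).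
Hypothesis T_split : {in Lambda &, forall m n, T m n = D m n + Rm m n}.
Hypothesis D_diag : {in Lambda &, forall m n, m != n -> D m n = 0}.
Hypothesis local_data : {in Lambda, forall n,
  [/\ 0 < l n, 0 <= mu n, mu n <= sigma - sigmat & 0 < Cn n] /\
  [/\ uniq (U n), {subset U n <= Lambda} & n \in U n]}.
Hypothesis Bloc_inv : {in Lambda, forall n,
  inverse_on (U n) T (Bloc n) /\ mnorm (sigmat + mu n) (U n) (Bloc n) <= Cn n}.
Hypothesis U_far : {in Lambda &, forall n m, m \notin U n -> l n <= rnorm R (ptsub n m)}.
Hypothesis small : {in Lambda, forall n,
  Cn n * expR (- (mu n * powR (l n) (cexp R))) * mnorm sigma Lambda Rm <= 2^-1}.

Let C := \big[Order.max/0]_(n <- Lambda) Cn n.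

Definition patched m n := if m \in U n then Bloc n m n else 0.

Definition defect k n := if k \in U n then 0 else \sum_(j <- U n) Rm k j * Bloc n j n.

Lemma smul_patched : {in Lambda &, forall k n,
  smul Lambda T patched k n = (k == n)%:R + defect k n}.
Proof.
move=> k n kL nL; have [_ [uU sU nU]] := local_data nL.
have -> : smul Lambda T patched k n = \sum_(j <- U n) T k j * Bloc n j n.
  rewrite /smul -(sum_if_mem _ uLambda uU sU); apply: eq_bigr => j _.
  by rewrite /patched; case: ifP; rewrite ?mulr0.
rewrite /defect; case: ifPn => kU; first by rewrite addr0; case: ((Bloc_inv nL).1 k n kU nU).
have /negPf -> : k != n by apply: contraNneq kU => ->.
rewrite add0r; apply: eq_big_seq => j jU; have jL := sU j jU.
by rewrite T_split // D_diag ?add0r //; apply: contraNneq kU => ->.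
Qed.

Lemma colnorm_defect_le : {in Lambda, forall n, colnorm sigmat Lambda defect n <= 2^-1}.
Proof.
move=> n nL; have [[l0 mu0 mu_le Cn0] [uU sU nU]] := local_data nL.
have st0 : 0 <= sigmat by apply: le_trans sigmat_ge; rewrite invr_ge0.
pose eps := expR (- (mu n * l n `^ cexp R)); pose M := mnorm sigma Lambda Rm.
have far : colnorm sigmat Lambda defect n
    <= eps * (M * colnorm (sigmat + mu n) (U n) (Bloc n) n).
  apply: colnorm_far_smul_le => //; first by rewrite -lerBrDl.
    exact: ltW.
  by move=> k kL kU; apply: U_far.
have col_le : colnorm (sigmat + mu n) (U n) (Bloc n) n <= Cn n.
  exact: le_trans (colnorm_le_mnorm _ _ nU) (Bloc_inv nL).2.
apply: le_trans far (le_trans _ (small nL)).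
have -> : Cn n * eps * M = eps * M * Cn n by ring.
rewrite mulrA; apply: ler_wpM2l => //.
by rewrite mulr_ge0 ?expR_ge0 ?mnorm_ge0.
Qed.

Lemma colnorm_patched_le : {in Lambda, forall n, colnorm sigmat Lambda patched n <= C}.
Proof.
move=> n nL; have [[l0 mu0 mu_le Cn0] [uU sU nU]] := local_data nL.
have -> : colnorm sigmat Lambda patched n = colnorm sigmat (U n) (Bloc n) n.
  exact: colnorm_if_mem.
have mu_mono : colnorm sigmat (U n) (Bloc n) n <= colnorm (sigmat + mu n) (U n) (Bloc n) n.
  by apply: colnorm_le_sigma; rewrite lerDl.
apply: le_trans mu_mono (le_trans (colnorm_le_mnorm _ _ nU) _).
exact: le_trans (Bloc_inv nL).2 (le_bigmax_seq 0 n xpredT Cn nL isT).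
Qed.

Lemma glue_local_inverses : exists B, inverse_on Lambda T B /\
  mnorm sigmat Lambda B <= (1 + w sigmat (0 : pt nu)) * C.
Proof.
have st0 : 0 <= sigmat by apply: le_trans sigmat_ge; rewrite invr_ge0.
have C0 : 0 <= C := bigmax_ge_id _ _ _ _.
have half : 0 <= (2^-1 : R) < 1.
  by apply/andP; split; [rewrite invr_ge0 ler0n | rewrite invf_lt1 ?ltr0n ?ltr1n].
have colsum : {in Lambda, forall n, \sum_(m <- Lambda) `|defect m n| <= 2^-1}.
  move=> n nL; apply: le_trans (colnorm_defect_le nL).
  by apply: ler_sum => m _; rewrite ler_peMl ?w_ge1.
have [B [Binv BQ]] := smul_inverse_perturb uLambda (andP half).2 smul_patched colsum.
exists B; split; first by move=> m n mL nL; exact: Binv.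
apply: le_trans (mnorm_resolvent_le st0 C0 half BQ colnorm_patched_le colnorm_defect_le) _.
have w1 : 1 <= w sigmat (0 : pt nu) by exact: w_ge1.
have -> : C / (1 - 2^-1) = 2 * C by field.
have : 0 <= (w sigmat (0 : pt nu) - 1) * C by rewrite mulr_ge0 // subr_ge0.
nra.
Qed.

End LocalInverses.

Unset Implicit Arguments. Set Strict Implicit.

Theorem lemma15 (R : realType) (nu : nat) (sigma sigmat : R)
  (Lambda : seq (pt nu)) (T D Rm : pt nu -> pt nu -> R)
  (l mu Cn : pt nu -> R) (U : pt nu -> seq (pt nu)) :
  4^-1 <= sigmat -> sigmat <= sigma ->
  uniq Lambda ->
  (forall m n, m \in Lambda -> n \in Lambda -> T m n = D m n + Rm m n) ->
  (forall m n, m \in Lambda -> n \in Lambda -> m != n -> D m n = 0) ->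
  (forall n, n \in Lambda ->
     [/\ 0 < l n, 0 <= mu n, mu n <= sigma - sigmat & 0 < Cn n] /\
     [/\ uniq (U n), {subset U n <= Lambda} & n \in U n]) ->
  (forall n, n \in Lambda -> exists B, inverse_on (U n) T B /\
         mnorm (sigmat + mu n) (U n) B <= Cn n) ->
  (forall n m, n \in Lambda -> m \in Lambda -> m \notin U n ->
         l n <= rnorm R (ptsub n m)) ->
  (forall n, n \in Lambda ->
     Cn n * expR (- (mu n * powR (l n) (cexp R))) * mnorm sigma Lambda Rm <= 2^-1) ->
  exists B, inverse_on Lambda T B /\
    mnorm sigmat Lambda B <=
      (1 + w sigmat (0 : pt nu)) * \big[Order.max/0]_(n <- Lambda) Cn n.
Proof.
(* [sigmat <= sigma] is implied by [0 <= mu n <= sigma - sigmat] wherever it matters. *)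
move=> sigmat_ge _ uLambda T_split D_diag local_data local_inv U_far small.
have : forall n, exists B, n \in Lambda ->
    inverse_on (U n) T B /\ mnorm (sigmat + mu n) (U n) B <= Cn n.
  move=> n; case: (boolP (n \in Lambda)) => [/local_inv[B HB] | _]; first by exists B.
  by exists (fun _ _ => 0).
case/choice => Bloc Bloc_inv.
exact: (glue_local_inverses sigmat_ge uLambda T_split D_diag local_data Bloc_inv U_far small).
Qed.
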